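(* Let $H$ be an abelian group with an alternating $\mathbb{Z}$-bilinear form $\langle-,-\rangle$, and let $z\in H\setminus\ker\mu$. Then $H_2(\mathbb{Q}[H])_{(z)}=0$.
   Context: $\mu:H\to\mathrm{Hom}_{\mathbb{Z}}(H,\mathbb{Z})$, $\mu(x)(y)=\langle x,y\rangle$. $\mathbb{Q}[H]$ is the $\mathbb{Q}$-vector space with basis symbols $[x]$, $x\in H$, with Lie bracket $[[x],[y]]=\langle x,y\rangle[x+y]$. Chevalley–Eilenberg complex $C_p(\mathbb{Q}[H])=\bigwedge^p_{\mathbb{Q}}\mathbb{Q}[H]$, $\partial(x_1\wedge\cdots\wedge x_p)=\sum_{i<j}(-1)^{i+j}[x_i,x_j]\wedge x_1\wedge\cdots\widehat{x_i}\cdots\widehat{x_j}\cdots\wedge x_p$. For $p>0$, $C_p(\mathbb{Q}[H])_{(z)}$ is the span of $[u_1]\wedge\cdots\wedge[u_p]$ with $u_1+\cdots+u_p=z$; it is a subcomplex, and $H_p(\mathbb{Q}[H])_{(z)}$ denotes its homology. *)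

From HB Require Import structures.
From mathcomp Require Import all_boot all_order all_algebra all_fingroup.
Set Implicit Arguments. Unset Strict Implicit. Unset Printing Implicit Defensive.
Import Order.TTheory GRing.Theory Num.Theory.
Local Open Scope ring_scope.

Definition alt_bilinear (H : zmodType) (B : H -> H -> int) : Prop :=
  [/\ forall x y y', B x (y + y') = B x y + B x y',
      forall x x' y, B (x + x') y = B x y + B x' y
    & forall x, B x x = 0].

Definition not_in_ker_mu (H : zmodType) (B : H -> H -> int) (z : H) : Prop :=
  exists y, B z y != 0.

(* A p-chain of the Chevalley--Eilenberg complex of Q[H] is written as a
   formal finite Q-linear combination of wedges [u_1] /\ ... /\ [u_p],
   a term (q, [:: u_1; ...; u_p]) standing for q [u_1] /\ ... /\ [u_p]. *)
Notation chain H := (seq (rat * seq H)).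

(* Antisymmetrization: coefficient of the basis tensor t in
   Alt([s_1] (x) ... (x) [s_p]) = sum_sigma sgn(sigma) [s_sigma(1)] (x) ... *)
Definition alt (H : zmodType) (s t : seq H) : rat :=
  \sum_(sg : 'S_(size s))
     (-1) ^+ odd_perm sg * ([seq nth 0 s (sg i) | i <- enum 'I_(size s)] == t)%:R.

(* The image of a formal chain in the tensor algebra under the (injective,
   char 0) embedding of the exterior algebra as alternating tensors. *)
Definition ev (H : zmodType) (c : chain H) (t : seq H) : rat :=
  \sum_(a <- c) a.1 * alt a.2 t.

Definition ext_eq (H : zmodType) (c d : chain H) : Prop :=
  forall t : seq H, ev c t = ev d t.

(* Chevalley--Eilenberg boundary on wedges (0-based indices; the sign
   (-1)^(i+j) is unchanged w.r.t. 1-based indexing):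
   d(x_1 /\ ... /\ x_p) = sum_(i<j) (-1)^(i+j) <x_i,x_j> [x_i+x_j] /\ x_1 ..^i..^j.. x_p *)
Definition ce_bd (H : zmodType) (B : H -> H -> int) (c : chain H) : chain H :=
  flatten [seq
    [seq (a.1 * (-1) ^+ (ij.1 + ij.2)%N * (B (nth 0 a.2 ij.1) (nth 0 a.2 ij.2))%:~R,
          (nth 0 a.2 ij.1 + nth 0 a.2 ij.2)
            :: [seq nth 0 a.2 k | k <- iota 0 (size a.2) & (k != ij.1) && (k != ij.2)])
    | ij <- [seq (i, j) | i <- iota 0 (size a.2), j <- iota 0 (size a.2)]
    & (ij.1 < ij.2)%N]
  | a <- c].

(* c lies in C_p(Q[H])_(z): a combination of wedges [u_1] /\ ... /\ [u_p]
   with u_1 + ... + u_p = z. *)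
Definition homog (H : zmodType) (p : nat) (z : H) (c : chain H) : Prop :=
  forall a, a \in c -> size a.2 = p /\ \sum_(h <- a.2) h = z.

(* H_p(Q[H])_(z) = 0 (p > 0): every cycle of C_p(z) is a boundary of an
   element of C_(p+1)(z). *)
Definition CE_homology_vanishes (H : zmodType) (B : H -> H -> int)
    (p : nat) (z : H) : Prop :=
  forall c : chain H, homog p z c -> ext_eq (ce_bd B c) [::] ->
    exists b : chain H, homog p.+1 z b /\ ext_eq (ce_bd B b) c.

From HB Require Import structures.
From mathcomp Require Import all_boot all_order all_algebra all_fingroup.
From mathcomp Require Import ring zify.
Set Implicit Arguments. Unset Strict Implicit. Unset Printing Implicit Defensive.
Import Order.TTheory GRing.Theory Num.Theory.
Local Open Scope ring_scope.

(* A 2-chain of degree z is a combination of the wedges e_a = [a] /\ [z - a],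
   and d e_a = -<a,z> [z].  Fixing y with m = <y,z> <> 0, the 2-cycles are
   spanned by f_a = e_a - (<a,z>/m) e_y, so it suffices that every f_a is a
   boundary.  The boundary of [u] /\ [v] /\ [z - u - v] is a linear relation
   between f_u, f_v and f_(u+v); it yields f_a for a orthogonal to y, then
   (shifting by multiples of z) for <a,z> <> 0, and finally for a in z^perp,
   using f_(z-a) = -f_a when needed. *)

Lemma perm_ord2_cases (s : 'S_2) : s = 1%g \/ s = tperm ord0 ord_max.
Proof.
have ord2 (i : 'I_2) : i = ord0 \/ i = ord_max.
  by case: i => [[|[|//]]] ?; [left|right]; apply/val_inj.
have [s0|s0] := ord2 (s ord0); [left|right]; apply/permP => i;
  rewrite ?perm1; case: (ord2 i) => ->; rewrite ?tpermL ?tpermR //;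
  by case: (ord2 (s ord_max)) => // s1; move/perm_inj: (etrans s1 (esym s0)).
Qed.

Section Chains.
Variable H : zmodType.
Implicit Types (c d : chain H) (u v w : H).

Lemma alt_singleton u t : alt [:: u] t = (t == [:: u])%:R.
Proof.
rewrite /alt /= (bigD1 1%g) //= big1 ?addr0; last first.
  move=> s /eqP; case; apply/permP => i; rewrite perm1; apply/val_inj.
  by case: (s i) => [[|//] ?]; case: i => [[|//] ?].
by rewrite odd_perm1 expr0 mul1r enum_ordSl enum_ord0 /= perm1 eq_sym.
Qed.

Lemma alt_pair u v t :
  alt [:: u; v] t = (t == [:: u; v])%:R - (t == [:: v; u])%:R.
Proof.
rewrite /alt /= (bigD1 1%g) //= (bigD1 (tperm ord0 ord_max)) //=; last first.
  by apply/eqP => /permP /(_ ord0); rewrite tpermL perm1.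
rewrite big1 ?addr0; last first.
  by move=> s /andP[/eqP s1 /eqP s2]; case: (perm_ord2_cases s).
rewrite odd_perm1 odd_tperm /= expr0 expr1 mul1r mulN1r.
rewrite enum_ordSl enum_ordSl enum_ord0 /=.
have -> : lift ord0 ord0 = ord_max :> 'I_2 by apply/val_inj.
by rewrite !perm1 tpermL tpermR /= !(eq_sym t).
Qed.

Lemma alt_pairC u v t : alt [:: u; v] t = - alt [:: v; u] t.
Proof. by rewrite !alt_pair opprB. Qed.

Definition scale_chain (k : rat) c : chain H := [seq (k * a.1, a.2) | a <- c].

Lemma ev_cat c d t : ev (c ++ d) t = ev c t + ev d t.
Proof. exact: big_cat. Qed.

Lemma ev_scale k c t : ev (scale_chain k c) t = k * ev c t.
Proof. by rewrite /ev big_map mulr_sumr; apply: eq_bigr => a _; rewrite mulrA. Qed.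

Variable B : H -> H -> int.

Lemma ce_bd_cat c d : ce_bd B (c ++ d) = ce_bd B c ++ ce_bd B d.
Proof. by rewrite /ce_bd map_cat flatten_cat. Qed.

Lemma ce_bd_scale k c : ce_bd B (scale_chain k c) = scale_chain k (ce_bd B c).
Proof.
rewrite /ce_bd /scale_chain map_flatten -!map_comp; congr flatten.
by apply: eq_map => a /=; rewrite -map_comp; apply: eq_map => ij /=; rewrite !mulrA.
Qed.

Lemma ce_bd_pair q u v :
  ce_bd B [:: (q, [:: u; v])] = [:: (q * (-1) * (B u v)%:~R, [:: u + v])].
Proof. by []. Qed.

Lemma ce_bd_triple q u v w :
  ce_bd B [:: (q, [:: u; v; w])] =
  [:: (q * (-1) * (B u v)%:~R, [:: u + v; w]);
      (q * (-1) ^+ 2 * (B u w)%:~R, [:: u + w; v]);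
      (q * (-1) ^+ 3 * (B v w)%:~R, [:: v + w; u])].
Proof. by []. Qed.

Lemma homog_cons p z a c :
  homog p z (a :: c) -> [/\ size a.2 = p, \sum_(h <- a.2) h = z & homog p z c].
Proof.
move=> hc; have [sz sum] := hc a (mem_head _ _).
by split=> // b bc; apply: hc; rewrite inE bc orbT.
Qed.

Lemma homog_scale p z k c : homog p z c -> homog p z (scale_chain k c).
Proof. by move=> hc a /mapP[a' /hc ? ->]. Qed.

Lemma homog_cat p z c d : homog p z c -> homog p z d -> homog p z (c ++ d).
Proof. by move=> hc hd a; rewrite mem_cat => /orP[/hc|/hd]. Qed.

Lemma homog2_shape z (s : seq H) : size s = 2%N -> \sum_(h <- s) h = z ->
  s = [:: nth 0 s 0; z - nth 0 s 0].
Proof.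
case: s => [|u [|v [|]]] //= _; rewrite !big_cons big_nil addr0 => <-.
by rewrite addrAC subrr add0r.
Qed.

End Chains.

Section AlternatingForm.
Variables (H : zmodType) (B : H -> H -> int).
Hypothesis hB : alt_bilinear B.

Lemma formDr x y y' : B x (y + y') = B x y + B x y'.
Proof. by case: hB. Qed.

Lemma formDl x x' y : B (x + x') y = B x y + B x' y.
Proof. by case: hB. Qed.

Lemma form_diag x : B x x = 0.
Proof. by case: hB. Qed.

Lemma formNr x y : B x (- y) = - B x y.
Proof.
have := formDr x y (- y); have := formDr x 0 0.
by rewrite subrr addr0; lia.
Qed.

Lemma formNl x y : B (- x) y = - B x y.
Proof.
have := formDl x (- x) y; have := formDl 0 0 y.
by rewrite subrr addr0; lia.
Qed.

Lemma formBr x y y' : B x (y - y') = B x y - B x y'.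
Proof. by rewrite formDr formNr. Qed.

Lemma formBl x x' y : B (x - x') y = B x y - B x' y.
Proof. by rewrite formDl formNl. Qed.

Lemma formC x y : B y x = - B x y.
Proof. have := form_diag (x + y); rewrite !formDl !formDr !form_diag; lia. Qed.

Lemma formMnl x y n : B (x *+ n) y = B x y *+ n.
Proof.
elim: n => [|n IH]; last by rewrite !mulrS formDl IH.
by rewrite !mulr0n -(subrr x) formBl subrr.
Qed.

Lemma formMzl x y k : B (x *~ k) y = B x y * k.
Proof.
case: k => n; first by rewrite -pmulrn formMnl -mulrzz pmulrn.
by rewrite NegzE !mulrNz formNl -pmulrn formMnl -mulrzz pmulrn.
Qed.

Variable z : H.

Definition br x y : rat := (B x y)%:~R.

Lemma brD x x' y : br (x + x') y = br x y + br x' y.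
Proof. by rewrite /br formDl intrD. Qed.

Definition wedge (a : H) (t : seq H) : rat := alt [:: a; z - a] t.

Lemma wedge_subz a t : wedge (z - a) t = - wedge a t.
Proof. by rewrite /wedge subKr alt_pairC. Qed.

Definition boundary (F : seq H -> rat) : Prop :=
  exists b, homog 3 z b /\ forall t, ev (ce_bd B b) t = F t.

Lemma boundary0 : boundary (fun=> 0).
Proof. by exists [::]; split => // t; rewrite /ev big_nil. Qed.

Lemma boundary_ext F G : F =1 G -> boundary F -> boundary G.
Proof. by move=> eFG [b [hb eb]]; exists b; split => // t; rewrite eb eFG. Qed.

Lemma boundaryD F G : boundary F -> boundary G -> boundary (fun t => F t + G t).
Proof.
move=> [bF [hF eF]] [bG [hG eG]]; exists (bF ++ bG).
by split; [exact: homog_cat | move=> t; rewrite ce_bd_cat ev_cat eF eG].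
Qed.

Lemma boundaryZ k F : boundary F -> boundary (fun t => k * F t).
Proof.
move=> [b [hb eb]]; exists (scale_chain k b).
by split; [exact: homog_scale | move=> t; rewrite ce_bd_scale ev_scale eb].
Qed.

Lemma boundary_triple u v :
  boundary (fun t => (br v z + br u v) * wedge u t
                     + (br u v - br u z) * wedge v t - br u v * wedge (u + v) t).
Proof.
exists [:: (1, [:: u; v; z - u - v])]; split.
  move=> a; rewrite inE => /eqP -> /=; split => //.
  by rewrite !big_cons big_nil addr0 -(addrA z) -opprD addrA subrKC.
move=> t; rewrite ce_bd_triple /ev !big_cons big_nil addr0 /=.
have -> : z - u - v = z - (u + v) by rewrite opprD addrA.
have -> : u + (z - (u + v)) = z - v by rewrite opprD addrCA (addrA u) subrr add0r.
have -> : v + (z - (u + v)) = z - u by rewrite opprD addrCA (addrCA v) subrr addr0.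
rewrite (alt_pairC (z - v)) (alt_pairC (z - u)) -!/(wedge _ _).
rewrite /br !formBr !formDr !form_diag (formC u v) !intrD !intrN; ring.
Qed.

Variable y : H.
Hypothesis yz_neq0 : B y z != 0.

Let m := br y z.

Lemma m_neq0 : m != 0.
Proof. by rewrite /m /br intr_eq0. Qed.

Definition cyc (a : H) (t : seq H) : rat := wedge a t - br a z / m * wedge y t.

Lemma cyc_subz a t : cyc (z - a) t = - cyc a t.
Proof. rewrite /cyc wedge_subz /br formBl form_diag sub0r intrN; ring. Qed.

Lemma boundary_cyc_triple u v :
  boundary (fun t => (br v z + br u v) * cyc u t
                     + (br u v - br u z) * cyc v t - br u v * cyc (u + v) t).
Proof.
by apply: boundary_ext (boundary_triple u v) => t; rewrite /cyc brD; field; exact: m_neq0.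
Qed.

Lemma boundary_cyc_solve u v :
  boundary (fun t => (br u v - br u z) * cyc v t) ->
  boundary (fun t => br u v * cyc (u + v) t) ->
  br v z + br u v != 0 -> boundary (cyc u).
Proof.
move=> hv huv hc.
have := boundaryZ (br v z + br u v)^-1 (boundaryD (boundaryD
  (boundary_cyc_triple u v) (boundaryZ (-1) hv)) huv).
by apply: boundary_ext => t; field.
Qed.

Lemma boundary_cyc_orth a : B a y = 0 -> boundary (cyc a).
Proof.
move=> ay0; apply: (@boundary_cyc_solve _ y); rewrite /br ?ay0 ?addr0.
- apply: boundary_ext boundary0 => t.
  by rewrite /cyc -/(br y z) -/m divff ?m_neq0 // mul1r subrr mulr0.
- by apply: boundary_ext boundary0 => t; rewrite mul0r.
- exact: m_neq0.
Qed.

Lemma boundary_cyc_shift x n :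
  B x z != 0 -> boundary (cyc (x + z *+ n)) -> boundary (cyc x).
Proof.
move=> xz0; elim: n => [|n IH]; first by rewrite addr0.
move=> hn; apply: IH; apply: (@boundary_cyc_solve _ z).
- by apply: boundary_ext boundary0 => t; rewrite subrr mul0r.
- by rewrite -addrA -mulrSr; apply: boundaryZ.
- by rewrite /br form_diag add0r formDl formMnl form_diag mul0rn addr0 intr_eq0.
Qed.

(* x = k a has <a,x> = 0, and x + n z is orthogonal to y for n = <a,y>^2 when
   k = <y,z><a,y>; squaring keeps the shift n a natural number. *)
Lemma boundary_cyc_nz a : B a z != 0 -> boundary (cyc a).
Proof.
move=> az0; have [ay0|ay0] := eqVneq (B a y) 0; first exact: boundary_cyc_orth.
pose x := a *~ (B y z * B a y).
have xz0 : B x z != 0 by rewrite formMzl !mulf_neq0.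
have ax0 : B a x = 0 by rewrite formC formMzl form_diag mul0r oppr0.
have : boundary (cyc (x + z *+ (`|B a y| * `|B a y|)%N)).
  apply: boundary_cyc_orth; rewrite formDl formMnl formMzl (formC y z) pmulrn mulrzz.
  by move: (B a y) (B y z) => ay yz; nia.
move=> /(boundary_cyc_shift xz0) hx; apply: (@boundary_cyc_solve _ x).
- exact: boundaryZ.
- by rewrite /br ax0; apply: boundary_ext boundary0 => t; rewrite mul0r.
- by rewrite /br ax0 addr0 intr_eq0.
Qed.

Lemma boundary_cyc_ker a : B a z = 0 -> B y (z - a) != 0 -> boundary (cyc a).
Proof.
move=> az0 yza0; apply: (@boundary_cyc_solve _ y).
- by apply: boundaryZ; apply: boundary_cyc_nz.
- by apply: boundaryZ; apply: boundary_cyc_nz; rewrite formDl az0 add0r.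
- by rewrite /br -intrD intr_eq0 (formC y a) -formBr.
Qed.

Lemma boundary_cyc a : boundary (cyc a).
Proof.
have [az0|] := eqVneq (B a z) 0; last exact: boundary_cyc_nz.
have [yza0|] := eqVneq (B y (z - a)) 0; last exact: boundary_cyc_ker.
have za_z0 : B (z - a) z = 0 by rewrite formBl form_diag az0 subrr.
have : B y (z - (z - a)) != 0 by rewrite formBr yza0 subr0.
move=> /(boundary_cyc_ker za_z0) /(boundaryZ (-1)); apply: boundary_ext => t.
by rewrite cyc_subz mulN1r opprK.
Qed.

Definition bd_coeff (c : chain H) : rat := \sum_(a <- c) a.1 * br (nth 0 a.2 0) z.

Lemma ev_ce_bd_z c : homog 2 z c -> ev (ce_bd B c) [:: z] = - bd_coeff c.
Proof.
elim: c => [|[q s] c IH]; first by rewrite /ev /bd_coeff !big_nil oppr0.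
case/homog_cons => /= sz sum hc; rewrite (homog2_shape sz sum).
rewrite -cat1s ce_bd_cat ev_cat IH // ce_bd_pair /ev /bd_coeff !big_cons !big_nil /=.
by rewrite subrKC alt_singleton eqxx /br formBr form_diag subr0 -/(bd_coeff c) subr0 mulr1; ring.
Qed.

Lemma boundary_chain2 c : homog 2 z c ->
  boundary (fun t => ev c t - bd_coeff c / m * wedge y t).
Proof.
elim: c => [|[q s] c IH].
  by move=> _; apply: boundary_ext boundary0 => t; rewrite /ev /bd_coeff !big_nil !mul0r subr0.
case/homog_cons => /= sz sum /IH hc.
apply: boundary_ext (boundaryD (boundaryZ q (boundary_cyc (nth 0 s 0))) hc) => t.
rewrite /ev /bd_coeff !big_cons -/(ev c t) -/(bd_coeff c) /= [in alt s _](homog2_shape sz sum).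
by rewrite -/(wedge _ _) /cyc; field; exact: m_neq0.
Qed.

End AlternatingForm.

Theorem proposition4p1 (H : zmodType) (B : H -> H -> int) (z : H) :
  alt_bilinear B -> not_in_ker_mu B z -> CE_homology_vanishes B 2 z.
Proof.
move=> hB [y zy0] c hc cycle_c.
have yz0 : B y z != 0 by rewrite (formC hB) oppr_eq0.
have [b [hb eb]] := boundary_chain2 hB yz0 hc.
have coeff0 : bd_coeff B z c = 0.
  by apply/eqP; rewrite -oppr_eq0 -(ev_ce_bd_z hB hc) cycle_c /ev big_nil.
by exists b; split => // t; rewrite eb coeff0 !mul0r subr0.
Qed.
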